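(* Let $E$ be a finite set and let $\mathcal{W}\subseteq\{+,-,0\}^E$ satisfy (A1), (A2), (A3). Let $U,U'\in\mathrm{asym}(\mathcal{W})$ with $\underline{U}=\underline{U'}$ and $I(U,-U')\cap\mathcal{W}=I(-U,U')\cap\mathcal{W}=\emptyset$, and let $P=U+(-U')$ (so $P\in\mathcal{P}(\mathcal{W})$). Then every $Z\in\mathcal{W}$ with $\underline{Z}\subseteq\underline{U}$ satisfies $Z_f=U_f$ for all $f\in\underline{U}\setminus\underline{P}$.
   Context: For $X\in\{+,-,0\}^E$: $X^+=\{e:X_e=+\}$, $X^-=\{e:X_e=-\}$, support $\underline{X}=X^+\cup X^-$; $(-X)_e=-X_e$; composition $(X\circ Y)_e=X_e$ if $X_e\neq0$, else $Y_e$; $S(X,Y)=(X^+\cap Y^-)\cup(X^-\cap Y^+)$. For sets, $\mathcal{A}\circ\mathcal{B}=\{A\circ B: A\in\mathcal{A}, B\in\mathcal{B}\}$. For $X,Y$ with $\underline{X}=\underline{Y}$, $X\neq Y$, $e\in S(X,Y)$: $I_e(X,Y)=\{V : \underline{V}\subseteq\underline{X}\setminus\{e\}, V_f=X_f\ \forall f\notin S(X,Y)\}$, $I(X,Y)=\bigcup_{e\in S(X,Y)}I_e(X,Y)$. Sum: $(X+Y)_e=0$ if $e\in S(X,Y)$, else $(X\circ Y)_e$. $\mathrm{sym}(\mathcal{W})=\{V: V,-V\in\mathcal{W}\}$, $\mathrm{asym}(\mathcal{W})=\{V\in\mathcal{W}: -V\notin\mathcal{W}\}$, $\mathcal{P}(\mathcal{W})=\{X+(-Y):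 X,Y\in\mathrm{asym}(\mathcal{W}), \underline{X}=\underline{Y}, I(X,-Y)\cap\mathcal{W}=I(-X,Y)\cap\mathcal{W}=\emptyset\}$. Axioms: (A1) $X,Y\in\mathcal{W}\Rightarrow X\circ Y\in\mathcal{W}$ and $X\circ(-Y)\in\mathcal{W}$; (A2) if $X,Y\in\mathcal{W}$ with $\underline{X}=\underline{Y}$ then $I_e(X,Y)\cap\mathcal{W}\neq\emptyset$ for every $e\in S(X,Y)$; (A3) $\mathcal{P}(\mathcal{W})\circ\mathcal{W}\subseteq\mathcal{W}$. *)

From mathcomp Require Import all_boot.
Set Implicit Arguments. Unset Strict Implicit. Unset Printing Implicit Defensive.

(* Signs: None = 0, Some true = +, Some false = -. *)
Definition sign := option bool.
Definition sgP : sign := Some true.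
Definition sgN : sign := Some false.
Definition sg0 : sign := None.

Section SignVectors.
Variable E : finType.
Definition svec := {ffun E -> sign}.

Definition plus_part (X : svec) : {set E} := [set e | X e == sgP].
Definition minus_part (X : svec) : {set E} := [set e | X e == sgN].
Definition supp (X : svec) : {set E} := [set e | X e != sg0].

Definition sopp (s : sign) : sign := omap negb s.
Definition vopp (X : svec) : svec := [ffun e => sopp (X e)].

Definition comp (X Y : svec) : svec :=
  [ffun e => if X e != sg0 then X e else Y e].

Definition sep (X Y : svec) : {set E} :=
  (plus_part X :&: minus_part Y) :|: (minus_part X :&: plus_part Y).

Definition vsum (X Y : svec) : svec :=
  [ffun e => if e \in sep X Y then sg0 else comp X Y e].

Definition Ie (X Y : svec) (e : E) : {set svec} :=
  [set V : svec | (supp V \subset supp X :\ e) &&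
                  [forall f, (f \notin sep X Y) ==> (V f == X f)]].

Definition Iset (X Y : svec) : {set svec} :=
  \bigcup_(e in sep X Y) Ie X Y e.

Definition sym (W : {set svec}) : {set svec} :=
  [set V | (V \in W) && (vopp V \in W)].
Definition asym (W : {set svec}) : {set svec} :=
  [set V in W | vopp V \notin W].

Definition Pset (W : {set svec}) : {set svec} :=
  [set Q | [exists X in asym W, exists Y in asym W,
     [&& supp X == supp Y,
         Iset X (vopp Y) :&: W == set0,
         Iset (vopp X) Y :&: W == set0 &
         Q == vsum X (vopp Y)]]].

Definition A1 (W : {set svec}) : Prop :=
  forall X Y, X \in W -> Y \in W -> comp X Y \in W /\ comp X (vopp Y) \in W.

Definition A2 (W : {set svec}) : Prop :=
  forall X Y, X \in W -> Y \in W -> supp X = supp Y ->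
    forall e, e \in sep X Y -> Ie X Y e :&: W != set0.

Definition A3 (W : {set svec}) : Prop :=
  forall P Z, P \in Pset W -> Z \in W -> comp P Z \in W.

End SignVectors.

From Pilot Require Import Defs.
From mathcomp Require Import all_boot.
Set Implicit Arguments. Unset Strict Implicit. Unset Printing Implicit Defensive.

(* Let S = S(U,-U') = {e : U_e = U'_e <> 0}, so that supp U \ supp P = S.
   Outside S the vector Y = P o Z (in W by A3) coincides with U, while
   Y_f = Z_f for f in S.  If Z_f = 0 then Y lies in I_f(U,-U') n W.  If
   Z_f = -U_f then X = Y o U has support supp U and is separated from U at f,
   so A2 gives some V in I_f(X,U) n W; as X agrees with U outside S, V lies in
   I_f(U,-U') as well.  Both contradict the hypothesis I(U,-U') n W = {}. *)

Section SignVectorFacts.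
Variable E : finType.
Implicit Types X Y V : svec E.

Lemma in_supp X e : (e \in supp X) = (X e != sg0).
Proof. by rewrite inE. Qed.

Lemma compE X Y e : Defs.comp X Y e = if X e != sg0 then X e else Y e.
Proof. by rewrite ffunE. Qed.

Lemma voppE X e : vopp X e = sopp (X e).
Proof. by rewrite ffunE. Qed.

Lemma in_sep_vopp X Y e :
  (e \in sep X (vopp Y)) = (X e != sg0) && (X e == Y e).
Proof. by rewrite !inE !voppE; case: (X e) => [[]|]; case: (Y e) => [[]|]. Qed.

Lemma sep_eq X Y e : X e = Y e -> e \notin sep X Y.
Proof. by rewrite !inE => ->; case: (Y e) => [[]|]. Qed.

Lemma Ie_intro X Y e V :
  supp V \subset supp X -> V e = sg0 ->
  (forall g, g \notin sep X Y -> V g = X g) -> V \in Ie X Y e.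
Proof.
move=> sVX Ve VX; rewrite inE; apply/andP; split.
  apply/subsetP => g gV; rewrite in_setD1 (subsetP sVX) // andbT.
  by apply: contraTneq gV => ->; rewrite in_supp Ve.
by apply/forallP => g; apply/implyP => /VX ->.
Qed.

Lemma Ie_sub X Y X' Y' e :
  supp X' = supp X ->
  (forall g, g \notin sep X Y -> X' g = X g /\ g \notin sep X' Y') ->
  Ie X' Y' e \subset Ie X Y e.
Proof.
move=> sXX' agree; apply/subsetP => V; rewrite !inE sXX' => /andP[-> /forallP VX'] /=.
apply/forallP => g; apply/implyP => /agree[X'g gS'].
by rewrite -X'g; exact: implyP (VX' g) gS'.
Qed.

Lemma vsum_opp_in_Pset W X Y :
  X \in asym W -> Y \in asym W -> supp X = supp Y ->
  Iset X (vopp Y) :&: W = set0 -> Iset (vopp X) Y :&: W = set0 ->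
  vsum X (vopp Y) \in Pset W.
Proof.
move=> XW YW sXY IXY IYX; rewrite inE; apply/existsP; exists X; rewrite XW.
by apply/existsP; exists Y; rewrite YW sXY IXY IYX !eqxx.
Qed.

Lemma Ie_Iset X Y e V : e \in sep X Y -> V \in Ie X Y e -> V \in Iset X Y.
Proof. by move=> eS VI; apply/bigcupP; exists e. Qed.

End SignVectorFacts.

Section CompositionWithSum.
Variables (E : finType) (U U' Z : svec E).
Hypothesis suppUU' : supp U = supp U'.
Hypothesis suppZU : supp Z \subset supp U.

Let P := vsum U (vopp U').
Let S := sep U (vopp U').

Lemma vsum_opp_offsep g : g \notin S -> Defs.comp P Z g = U g.
Proof.
have /setP/(_ g) := suppUU'; have /subsetP/(_ g) := suppZU.
rewrite /S !ffunE in_sep_vopp !in_supp.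
by case: (U g) => [[]|]; case: (U' g) => [[]|]; case: (Z g) => [[]|] //= /(_ isT).
Qed.

Lemma vsum_opp_onsep g : g \in S -> Defs.comp P Z g = Z g.
Proof. by move=> gS; rewrite compE ffunE gS. Qed.

Lemma supp_comp_vsum_opp : supp (Defs.comp P Z) \subset supp U.
Proof.
apply/subsetP => g; rewrite !in_supp.
case: (boolP (g \in S)) => [gS | /vsum_opp_offsep -> //].
by rewrite vsum_opp_onsep // -!in_supp; apply: (subsetP suppZU).
Qed.

Lemma supp_vsum_oppD f : f \in supp U :\: supp P -> f \in S.
Proof.
rewrite in_setD !in_supp ffunE /S in_sep_vopp compE !voppE.
by case: (U f) => [[]|]; case: (U' f) => [[]|].
Qed.

End CompositionWithSum.

Section RigidityOffSeparation.
Variables (E : finType) (W : {set svec E}) (U U' Y : svec E).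
Hypotheses (hA1 : A1 W) (hA2 : A2 W).
Hypotheses (UW : U \in W) (IW : Iset U (vopp U') :&: W = set0).
Hypotheses (YW : Y \in W) (suppYU : supp Y \subset supp U).
Hypothesis YU : forall g, g \notin sep U (vopp U') -> Y g = U g.

Let Ie_sep_notin_W V f : f \in sep U (vopp U') -> V \in Ie U (vopp U') f -> V \notin W.
Proof.
move=> fS /(Ie_Iset fS) VI; apply/negP => VW.
by have := in_set0 V; rewrite -IW inE VI VW.
Qed.

Lemma agree_off_sep_neq0 f : f \in sep U (vopp U') -> Y f != sg0.
Proof.
move=> fS; apply/eqP => Yf; apply: (negP (Ie_sep_notin_W fS _)) YW.
by apply: Ie_intro.
Qed.

Lemma agree_off_sep_not_opp f : f \in sep U (vopp U') -> Y f != sopp (U f).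
Proof.
move=> fS; apply/eqP => Yf.
set X := Defs.comp Y U; have XW : X \in W := (hA1 YW UW).1.
have XU g : g \notin sep U (vopp U') -> X g = U g.
  by move=> /YU YUg; rewrite compE YUg; case: (U g).
have sXU : supp X = supp U.
  apply/setP => g; rewrite !in_supp compE.
  case: ifPn => // Yg; rewrite Yg -in_supp; apply/esym.
  by apply: (subsetP suppYU); rewrite in_supp.
have fXU : f \in sep X U.
  move: fS; rewrite in_sep_vopp !inE compE Yf.
  by case: (U f) => [[]|]; case: (U' f) => [[]|].
have /set0Pn[V] := hA2 XW UW sXU fXU; rewrite inE => /andP[VI].
apply/negP/(Ie_sep_notin_W fS).
have agree g : g \notin sep U (vopp U') -> X g = U g /\ g \notin sep X U.
  by move=> /XU XUg; split=> //; exact: sep_eq.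
exact: subsetP (Ie_sub f sXU agree) V VI.
Qed.

Lemma agree_off_sep f : f \in sep U (vopp U') -> Y f = U f.
Proof.
move=> fS; have := agree_off_sep_not_opp fS; have := agree_off_sep_neq0 fS.
move: fS; rewrite in_sep_vopp.
by case: (U f) => [[]|]; case: (Y f) => [[]|].
Qed.

End RigidityOffSeparation.

Theorem lemma2p4 (E : finType) (W : {set svec E}) :
  A1 W -> A2 W -> A3 W ->
  forall U U' : svec E,
    U \in asym W -> U' \in asym W -> supp U = supp U' ->
    Iset U (vopp U') :&: W = set0 -> Iset (vopp U) U' :&: W = set0 ->
    forall Z : svec E, Z \in W -> supp Z \subset supp U ->
      forall f, f \in supp U :\: supp (vsum U (vopp U')) -> Z f = U f.
Proof.
move=> hA1 hA2 hA3 U U' HU HU' sUU' IW IW' Z HZ sZU f /supp_vsum_oppD fS.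
have UW : U \in W by move: HU; rewrite inE => /andP[].
have PW := vsum_opp_in_Pset HU HU' sUU' IW IW'.
rewrite -(vsum_opp_onsep Z fS).
apply: agree_off_sep hA1 hA2 UW IW _ _ _ f fS.
- exact: hA3 PW HZ.
- exact: supp_comp_vsum_opp sUU' sZU.
- exact: vsum_opp_offsep sUU' sZU.
Qed.
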